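(* If $\mathbf{A}$ is a finite solvable algebra with a Maltsev polynomial, then $\mathbf{A}$ is a spread of its type $\mathbf{2}$ minimal sets.
   Context: Solvability is with respect to the term condition commutator. A Maltsev polynomial is a polynomial $m$ with $m(x,y,y)=x=m(y,y,x)$. Type $\mathbf{2}$ minimal sets are the $\langle\alpha,\beta\rangle$-minimal sets (tame congruence theory) for prime quotients $\alpha\prec\beta$ of $\mathrm{Con}(\mathbf{A})$ of type $\mathbf{2}$. $A$ is a spread of a collection $\mathcal U$ of subsets if $A=p(U_1,\dots,U_k)$ for some polynomial $p$ of $\mathbf{A}$ and (not necessarily distinct) $U_i\in\mathcal U$. *)

From mathcomp Require Import all_boot all_order all_algebra.
Set Implicit Arguments. Unset Strict Implicit. Unset Printing Implicit Defensive.
Import GRing.Theory.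
Local Open Scope ring_scope.

Section UA.
Variables (T : finType) (I : Type) (ar : I -> nat)
          (op : forall i : I, ('I_(ar i) -> T) -> T).

(* Syntax: n-ary terms with constants (polynomial expressions). *)
Inductive term (n : nat) : Type :=
| Var : 'I_n -> term n
| Cst : T -> term n
| App : forall i : I, ('I_(ar i) -> term n) -> term n.

Fixpoint eval n (t : term n) (x : 'I_n -> T) : T :=
  match t with
  | Var i => x i
  | Cst c => c
  | App i args => op (fun j => eval (args j) x)
  end.

Fixpoint const_free n (t : term n) : Prop :=
  match t with
  | Var _ => True
  | Cst _ => False
  | App i args => forall j, const_free (args j)
  end.

Definition is_poly n (p : ('I_n -> T) -> T) : Prop :=
  exists t : term n, forall x, eval t x = p x.

Definition is_termop n (p : ('I_n -> T) -> T) : Prop :=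
  exists t : term n, const_free t /\ forall x, eval t x = p x.

Definition unary_poly (f : T -> T) : Prop := is_poly (fun x : 'I_1 -> T => f (x ord0)).

Definition mk3 (x y z : T) : 'I_3 -> T :=
  fun i => match val i with 0 => x | 1 => y | _ => z end.

Definition maltsev_poly (m : ('I_3 -> T) -> T) : Prop :=
  is_poly m /\ forall x y, m (mk3 x y y) = x /\ m (mk3 y y x) = x.

Definition congruence (R : T -> T -> Prop) : Prop :=
  [/\ (forall x, R x x), (forall x y, R x y -> R y x),
      (forall x y z, R x y -> R y z -> R x z) &
      (forall i (x y : 'I_(ar i) -> T), (forall j, R (x j) (y j)) ->
          R (op x) (op y))].

Definition rle (R S : T -> T -> Prop) : Prop := forall x y, R x y -> S x y.

Definition prime_quotient (alpha beta : T -> T -> Prop) : Prop :=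
  [/\ congruence alpha, congruence beta, rle alpha beta, ~ rle beta alpha &
      forall gamma, congruence gamma -> rle alpha gamma -> rle gamma beta ->
        rle gamma alpha \/ rle beta gamma].

Definition join_args m n (a : 'I_m -> T) (c : 'I_n -> T) : 'I_(m + n) -> T :=
  fun i => match split i with inl j => a j | inr j => c j end.

Definition centralizes (alpha beta delta : T -> T -> Prop) : Prop :=
  forall m n (t : ('I_(m + n) -> T) -> T), is_termop t ->
  forall (a b : 'I_m -> T) (c d : 'I_n -> T),
    (forall i, alpha (a i) (b i)) -> (forall j, beta (c j) (d j)) ->
    delta (t (join_args a c)) (t (join_args a d)) ->
    delta (t (join_args b c)) (t (join_args b d)).

Definition commutator (alpha beta : T -> T -> Prop) : T -> T -> Prop :=
  fun x y => forall delta, congruence delta -> centralizes alpha beta delta ->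
    delta x y.

Fixpoint derived (k : nat) : T -> T -> Prop :=
  match k with
  | 0 => fun _ _ => True
  | k.+1 => commutator (derived k) (derived k)
  end.

Definition solvable_alg : Prop :=
  exists k, forall x y, derived k x y -> x = y.

Definition img (f : T -> T) : {set T} := [set f x | x in T].

Definition sep (alpha beta : T -> T -> Prop) (f : T -> T) : Prop :=
  exists x y, beta x y /\ ~ alpha (f x) (f y).

Definition minimal_set (alpha beta : T -> T -> Prop) (U : {set T}) : Prop :=
  (exists f, [/\ unary_poly f, sep alpha beta f & U = img f]) /\
  (forall f, unary_poly f -> sep alpha beta f -> img f \subset U -> img f = U).

Definition trace (alpha beta : T -> T -> Prop) (U : {set T}) (N : T -> Prop) :=
  exists b, [/\ b \in U, (forall x, N x <-> (x \in U /\ beta b x)) &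
                exists x y, [/\ N x, N y & ~ alpha x y]].

Definition preserves n (N : T -> Prop) (p : ('I_n -> T) -> T) : Prop :=
  forall x, (forall i, N (x i)) -> N (p x).

(* The induced algebra A|_N / alpha|_N (whose operations are the polynomials
   of A preserving N) is polynomially equivalent to a vector space:
   via a bijection phi : N/alpha -> V, its polynomial operations are exactly
   the affine maps  x |-> v0 + sum_i c_i x_i  of V. *)
Definition induced_is_vector_space (alpha : T -> T -> Prop) (N : T -> Prop)
  : Prop :=
  exists (K : fieldType) (V : lmodType K) (phi : T -> V),
  [/\ (forall x y, N x -> N y -> (phi x = phi y <-> alpha x y)),
      (forall v, exists x, N x /\ phi x = v),
      (forall n (p : ('I_n -> T) -> T), is_poly p -> preserves N p ->
         exists (c : 'I_n -> K) (v0 : V), forall x, (forall i, N (x i)) ->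
           phi (p x) = v0 + \sum_(i < n) c i *: phi (x i)) &
      (forall n (c : 'I_n -> K) (v0 : V),
         exists p : ('I_n -> T) -> T, [/\ is_poly p, preserves N p &
           forall x, (forall i, N (x i)) ->
             phi (p x) = v0 + \sum_(i < n) c i *: phi (x i)])].

Definition type2 (alpha beta : T -> T -> Prop) : Prop :=
  prime_quotient alpha beta /\
  exists U N, [/\ minimal_set alpha beta U, trace alpha beta U N &
                  induced_is_vector_space alpha N].

Definition type2_minimal_set (U : {set T}) : Prop :=
  exists alpha beta, type2 alpha beta /\ minimal_set alpha beta U.

Definition spread_of (P : {set T} -> Prop) : Prop :=
  exists k (p : ('I_k -> T) -> T) (Us : 'I_k -> {set T}),
    [/\ is_poly p, (forall i, P (Us i)) &
        forall a, exists u : 'I_k -> T, (forall i, u i \in Us i) /\ p u = a].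

End UA.

(* Descend the derived series 1 = theta_0 >= theta_1 >= ... >= theta_K = 0,
   showing that A is a spread of type 2 minimal sets modulo each theta_j, that
   is, every element is theta_j-related to a value p(u) of a fixed polynomial
   at arguments u ranging over type 2 minimal sets.

   Each cover alpha < beta inside [theta_(j+1), theta_j] is abelian:
   C(beta, beta; alpha).  With the Maltsev polynomial M this makes M behave
   affinely modulo alpha on beta-classes, so x + y := M x b y is an abelian
   group there.  For an (alpha, beta)-minimal set U with trace N through b,
   the unary polynomials preserving N and fixing b modulo alpha form a finite
   ring without zero divisors (by minimality of U), hence a field, and N/alpha
   is a vector space over it whose polynomial operations are the affine maps:
   the cover has type 2.

   To refine a spread modulo beta to one modulo alpha, take b, b' in U with
   (b, b') in beta but not in alpha.  For every (x, a) in beta some unary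
   polynomial h sends (b, b') to (x, a) modulo alpha, so M x (h b) (h b') is
   alpha-related to a; one extra argument ranging over U for each pair
   (x, a) in A^2 performs all the needed corrections. *)

From HB Require Import structures.
From mathcomp Require Import all_boot all_order all_algebra all_field zify.
From Stdlib Require Import Classical ClassicalEpsilon FunctionalExtensionality.
From Stdlib Require Import Setoid Morphisms.

Set Implicit Arguments. Unset Strict Implicit. Unset Printing Implicit Defensive.
Import GRing.Theory.

Definition pbool (P : Prop) : bool := if excluded_middle_informative P then true else false.

Lemma pboolP (P : Prop) : reflect P (pbool P).
Proof. by rewrite /pbool; case: excluded_middle_informative => h; constructor. Qed.

Lemma iter_id_on_surjective (T : finType) (U : {set T}) (s : T -> T) :
  (forall u, u \in U -> exists2 w, w \in U & s w = u) ->
  exists2 j, (0 < j)%N & forall u, u \in U -> iter j s u = u.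
Proof.
move=> s_onto.
pose F (i : 'I_#|{ffun T -> T}|.+1) : {ffun T -> T} := [ffun x => iter i s x].
have /injectivePn [i1 [i2 ne12 eqF]] : ~~ injectiveb F.
  apply/negP => /injectiveP /leq_card; by rewrite card_ord ltnn.
have periodic (a c : 'I_#|{ffun T -> T}|.+1) : (a < c)%N -> F a = F c ->
    exists2 j, (0 < j)%N & forall u, u \in U -> iter j s u = u.
  move=> ac eac; exists (c - a)%N => [|u uU]; first by rewrite subn_gt0.
  have [w wU <-] : exists2 w, w \in U & iter a s w = u.
    elim: (nat_of_ord a) u uU => [|k IH] u uU; first by exists u.
    have [w1 w1U <-] := s_onto u uU; have [w wU ew] := IH w1 w1U.
    by exists w; rewrite ?iterS ?ew.
  have := congr1 (fun g : {ffun T -> T} => g w) eac; rewrite !ffunE => eqw.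
  by rewrite -iterD subnK ?eqw // ltnW.
case: (ltngtP i1 i2) => [lt12|lt21|/val_inj eq12]; first exact: periodic lt12 eqF.
  exact: periodic lt21 (esym eqF).
by rewrite eq12 eqxx in ne12.
Qed.

Lemma sum_ord_ltS (R : zmodType) n (F : 'I_n -> R) j (hj : (j < n)%N) :
  (\sum_(i < n | (i < j.+1)%N) F i = \sum_(i < n | (i < j)%N) F i + F (Ordinal hj))%R.
Proof.
rewrite (bigD1 (Ordinal hj)) /=; last by rewrite ltnS leqnn.
rewrite addrC; congr (_ + _)%R; apply: eq_bigl => i.
by rewrite -val_eqE /= ltnS [(i < j)%N]ltn_neqAle andbC.
Qed.

Section FinDomainField.
Variables (K : finType) (zero one : K) (add : K -> K -> K) (opp : K -> K)
  (mul : K -> K -> K).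
Hypotheses (addA : associative add) (addC : commutative add)
  (add0 : left_id zero add) (addN : left_inverse zero opp add)
  (mulA : associative mul) (mul1 : left_id one mul) (mul1r : right_id one mul)
  (mulDl : left_distributive mul add) (mulDr : right_distributive mul add)
  (one_neq0 : one != zero)
  (mul_eq0 : forall x y, mul x y = zero -> x = zero \/ y = zero).

Definition fin_domain : Type := K.
HB.instance Definition _ := Finite.on fin_domain.
HB.instance Definition _ := GRing.isZmodule.Build fin_domain addA addC add0 addN.
HB.instance Definition _ :=
  GRing.Zmodule_isNzRing.Build fin_domain mulA mul1 mul1r mulDl mulDr one_neq0.
HB.instance Definition _ := FinRing.isNzRing.Build fin_domain.

Lemma fin_domain_integral : GRing.integral_domain_axiom fin_domain.
Proof. by move=> x y /mul_eq0 [] ->; rewrite eqxx ?orbT. Qed.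

Definition fin_domain_field : finFieldType := FinDomainFieldType fin_domain_integral.

End FinDomainField.

(** * Polynomials and the term condition *)

Section Polynomials.
Variables (T : finType) (I : Type) (ar : I -> nat)
          (op : forall i : I, ('I_(ar i) -> T) -> T).
Local Notation term := (term T ar).
Local Notation eval := (eval op).
Local Notation is_poly := (is_poly op).
Local Notation unary_poly := (unary_poly op).
Local Notation congruence := (congruence op).

Fixpoint subst n k (t : term n) (s : 'I_n -> term k) : term k :=
  match t with
  | Var i => s i
  | Cst c => Cst ar k c
  | App i args => App (fun j => subst (args j) s)
  end.

Lemma eval_subst n k (t : term n) (s : 'I_n -> term k) x :
  eval (subst t s) x = eval t (fun j => eval (s j) x).
Proof.
elim: t => [i|c|i args IH] //=; congr (op _).
by apply: functional_extensionality_dep => j; exact: IH.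
Qed.

Lemma poly_comp n k (p : ('I_n -> T) -> T) (q : 'I_n -> ('I_k -> T) -> T) :
  is_poly p -> (forall j, is_poly (q j)) -> is_poly (fun x => p (fun j => q j x)).
Proof.
move=> [t ht] /(choice _) [s hs]; exists (subst t s) => x.
by rewrite eval_subst -ht; congr (eval t _); apply: functional_extensionality.
Qed.

Lemma poly_proj n (i : 'I_n) : is_poly (fun x => x i).
Proof. by exists (Var T ar i). Qed.

Lemma poly_cst n (c : T) : is_poly (fun _ : 'I_n -> T => c).
Proof. by exists (Cst ar n c). Qed.

Lemma poly_op n i (q : 'I_(ar i) -> ('I_n -> T) -> T) :
  (forall j, is_poly (q j)) -> is_poly (fun x => op (fun j => q j x)).
Proof.
move=> /(choice _) [s hs]; exists (App s) => x /=; congr (op _).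
exact: functional_extensionality.
Qed.

Lemma poly_unary_comp n (f : T -> T) (p : ('I_n -> T) -> T) :
  unary_poly f -> is_poly p -> is_poly (fun x => f (p x)).
Proof. by move=> hf hp; exact: (poly_comp (q := fun _ : 'I_1 => p) hf (fun _ => hp)). Qed.

Lemma unary_poly_id : unary_poly id.
Proof. exact: poly_proj. Qed.

Lemma unary_poly_cst c : unary_poly (fun _ => c).
Proof. exact: poly_cst. Qed.

Lemma unary_poly_compose f g : unary_poly f -> unary_poly g -> unary_poly (f \o g).
Proof. exact: poly_unary_comp. Qed.

Lemma unary_poly_iter (s : T -> T) j : unary_poly s -> unary_poly (iter j s).
Proof.
move=> hs; elim: j => [|j IH]; first exact: unary_poly_id.
exact: unary_poly_compose hs IH.
Qed.

Lemma congruence_equiv R : congruence R -> Equivalence R.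
Proof. by case=> Rr Rs Rt _; split; [exact: Rr | exact: Rs | exact: Rt]. Qed.

Lemma congruence_poly R n (p : ('I_n -> T) -> T) x y :
  congruence R -> is_poly p -> (forall i, R (x i) (y i)) -> R (p x) (p y).
Proof.
case=> Rr _ _ Rop [t ht] Rxy; rewrite -!ht {ht p}.
by elim: t => [i|c|i args IH] /=; [exact: Rxy | exact: Rr | exact: Rop].
Qed.

Lemma congruence_unary_poly R f x y :
  congruence R -> unary_poly f -> R x y -> R (f x) (f y).
Proof.
by move=> hR hf Rxy; apply: (congruence_poly (x := fun _ => x) (y := fun _ => y) hR hf).
Qed.

Lemma congruence_iter R (s : T -> T) j x y :
  congruence R -> unary_poly s -> R x y -> R (iter j s x) (iter j s y).
Proof. by move=> hR hs Rxy; apply: congruence_unary_poly => //; exact: unary_poly_iter. Qed.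

Lemma img_f (f : T -> T) x : f x \in img f.
Proof. by apply/imsetP; exists x. Qed.

Lemma join_args_lshift m n (a : 'I_m -> T) (c : 'I_n -> T) i :
  join_args a c (lshift n i) = a i.
Proof. by rewrite /join_args (unsplitK (inl i)). Qed.

Lemma join_args_rshift m n (a : 'I_m -> T) (c : 'I_n -> T) i :
  join_args a c (rshift m i) = c i.
Proof. by rewrite /join_args (unsplitK (inr i)). Qed.

(* To apply the term condition to a polynomial, its constants become extra
   variables of the alpha-block, all of them set to the enumeration of T. *)
Section ConstantsAsVariables.
Variables m n : nat.

Definition shift_var (i : 'I_(m + n)) : 'I_(m + #|T| + n) :=
  match split i with
  | inl j => lshift n (lshift #|T| j)
  | inr j => rshift (m + #|T|) j
  end.

Fixpoint abstract_csts (t : term (m + n)) : term (m + #|T| + n) :=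
  match t with
  | Var i => Var T ar (shift_var i)
  | Cst c => Var T ar (lshift n (rshift m (enum_rank c)))
  | App i args => App (fun j => abstract_csts (args j))
  end.

Lemma abstract_csts_free t : const_free (abstract_csts t).
Proof. by elim: t => //= i args IH j; exact: IH. Qed.

Lemma eval_abstract_csts t (a : 'I_m -> T) (c : 'I_n -> T) :
  eval (abstract_csts t) (join_args (join_args a enum_val) c) = eval t (join_args a c).
Proof.
elim: t => [i|x|i args IH] /=.
- rewrite /shift_var [in RHS]/join_args.
  by case: (split i) => j; rewrite ?join_args_lshift ?join_args_rshift.
- by rewrite join_args_lshift join_args_rshift enum_rankK.
- by congr (op _); apply: functional_extensionality => j; exact: IH.
Qed.
End ConstantsAsVariables.

Lemma centralizes_poly (alpha beta delta : T -> T -> Prop) :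
  centralizes op alpha beta delta -> (forall x, alpha x x) ->
  forall m n (p : ('I_(m + n) -> T) -> T), is_poly p ->
  forall (a b : 'I_m -> T) (c d : 'I_n -> T),
    (forall i, alpha (a i) (b i)) -> (forall j, beta (c j) (d j)) ->
    delta (p (join_args a c)) (p (join_args a d)) ->
    delta (p (join_args b c)) (p (join_args b d)).
Proof.
move=> hC alpha_refl m n p [t ht] a b c d ab cd.
rewrite -!ht -!(eval_abstract_csts t).
apply: (hC _ n (eval (abstract_csts t))) => //.
- by exists (abstract_csts t); split; first exact: abstract_csts_free.
- by move=> i; rewrite /join_args; case: (split i).
Qed.

End Polynomials.

(** * The Maltsev polynomial over abelian congruences *)

Section Maltsev.
Variables (T : finType) (I : Type) (ar : I -> nat)
          (op : forall i : I, ('I_(ar i) -> T) -> T).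
Local Notation is_poly := (is_poly op).
Variable m : ('I_3 -> T) -> T.
Hypothesis hm : maltsev_poly op m.

Definition mal x y z := m (mk3 x y z).

Lemma malxyy x y : mal x y y = x. Proof. by case: hm => _ /(_ x y) []. Qed.
Lemma malyyx x y : mal y y x = x. Proof. by case: hm => _ /(_ x y) []. Qed.

Lemma poly_mal n (p q r : ('I_n -> T) -> T) :
  is_poly p -> is_poly q -> is_poly r -> is_poly (fun x => mal (p x) (q x) (r x)).
Proof.
move=> hp hq hr; case: hm => hm_poly _.
apply: (poly_comp (q := fun j x => mk3 (p x) (q x) (r x) j) hm_poly).
by case=> [[|[|[|k]]] hk].
Qed.

Lemma unary_poly_mal (f g h : T -> T) :
  unary_poly op f -> unary_poly op g -> unary_poly op h ->
  unary_poly op (fun x => mal (f x) (g x) (h x)).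
Proof. exact: poly_mal. Qed.

Lemma congruence_mal R x y z x' y' z' : congruence op R ->
  R x x' -> R y y' -> R z z' -> R (mal x y z) (mal x' y' z').
Proof.
move=> hR Rx Ry Rz; case: hm => hm_poly _.
by apply: (congruence_poly hR hm_poly); case=> [[|[|[|k]]] hk].
Qed.

(* Term condition for s u v := M (p (M u y v)) (M (p u) (p y) (p v)) c, where
   c := M (p x) (p y) (p z), moving u from y to x and v from y to z:
   s y y = c = s y z, hence c = s x y and s x z = p (M x y z) are delta-related. *)
Lemma abelian_mal_poly (beta delta : T -> T -> Prop) n (p : ('I_n -> T) -> T)
    (x y z : 'I_n -> T) :
  congruence op beta -> (forall u, delta u u) -> centralizes op beta beta delta ->
  is_poly p -> (forall i, beta (y i) (x i)) -> (forall i, beta (y i) (z i)) ->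
  delta (mal (p x) (p y) (p z)) (p (fun i => mal (x i) (y i) (z i))).
Proof.
move=> hbeta delta_refl hC hp yx yz.
have beta_refl : forall u, beta u u by case: hbeta.
pose c := mal (p x) (p y) (p z).
pose F (u v : 'I_n -> T) := mal (p (fun i => mal (u i) (y i) (v i))) (mal (p u) (p y) (p v)) c.
pose s (w : 'I_(n + n) -> T) := F (fun i => w (lshift n i)) (fun i => w (rshift n i)).
have sE u v : s (join_args u v) = F u v.
  by congr F; apply: functional_extensionality => i;
    rewrite ?join_args_lshift ?join_args_rshift.
have s_poly : is_poly s.
  have hl i : is_poly (fun w : 'I_(n + n) -> T => w (lshift n i)) by exact: poly_proj.
  have hr i : is_poly (fun w : 'I_(n + n) -> T => w (rshift n i)) by exact: poly_proj.
  apply: poly_mal; last exact: poly_cst.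
    apply: (poly_comp hp) => i; apply: poly_mal; [exact: hl | exact: poly_cst | exact: hr].
  by apply: poly_mal; [exact: poly_comp hp hl | exact: poly_cst | exact: poly_comp hp hr].
have := centralizes_poly hC beta_refl s_poly yx yz.
have yyv v : (fun i => mal (y i) (y i) (v i)) = v.
  by apply: functional_extensionality => i; rewrite malyyx.
have xyy : (fun i => mal (x i) (y i) (y i)) = x.
  by apply: functional_extensionality => i; rewrite malxyy.
rewrite !sE /F !yyv xyy !malyyx malxyy => /(_ (delta_refl c)).
by rewrite malyyx -/c malxyy.
Qed.

End Maltsev.

Lemma minimal_set_exists (T : finType) (I : Type) (ar : I -> nat)
    (op : forall i : I, ('I_(ar i) -> T) -> T) (alpha beta : T -> T -> Prop) :
  ~ rle beta alpha -> exists f x0 y0, [/\ unary_poly op f, beta x0 y0, ~ alpha (f x0) (f y0) &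
    forall g, unary_poly op g -> sep alpha beta g -> img g \subset img f -> img g = img f].
Proof.
move=> beta_not_alpha.
have [x1 [y1 [bxy1 nxy1]]] : exists x y, beta x y /\ ~ alpha x y.
  apply: NNPP => none; apply: beta_not_alpha => x y bxy; apply: NNPP => nxy.
  by apply: none; exists x, y.
pose P n := pbool (exists f, [/\ unary_poly op f, sep alpha beta f & #|img f| = n]).
have [|n /pboolP [f [hf [x0 [y0 [bxy nxy]]] card_f]] minf] := @ex_minnP P.
  exists #|img (@id T)|; apply/pboolP.
  by exists id; split; [exact: unary_poly_id | exists x1, y1 |].
exists f, x0, y0; split=> // g hg sg sub; apply/eqP; rewrite eqEcard sub /= card_f.
by apply: minf; apply/pboolP; exists g.
Qed.

Create HintDb trace.

Section AbelianCover.
Variables (T : finType) (I : Type) (ar : I -> nat)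
          (op : forall i : I, ('I_(ar i) -> T) -> T).
Variable m : ('I_3 -> T) -> T.
Hypothesis hm : maltsev_poly op m.
Local Notation M := (mal m).
Variables alpha beta delta : T -> T -> Prop.
Hypotheses (halpha : congruence op alpha) (hbeta : congruence op beta)
  (delta_refl : forall x, delta x x) (delta_alpha : rle delta alpha)
  (habel : centralizes op beta beta delta).

#[local] Instance alpha_equiv : Equivalence alpha := congruence_equiv halpha.
#[local] Instance beta_equiv : Equivalence beta := congruence_equiv hbeta.
#[local] Instance mal_alpha_proper : Proper (alpha ==> alpha ==> alpha ==> alpha) M.
Proof. by move=> x x' ? y y' ? z z' ?; apply: (congruence_mal hm halpha). Qed.

Lemma mal_medial a1 a2 a3 b1 b2 b3 c1 c2 c3 :
  beta b1 a1 -> beta b2 a2 -> beta b3 a3 -> beta b1 c1 -> beta b2 c2 -> beta b3 c3 ->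
  alpha (M (M a1 a2 a3) (M b1 b2 b3) (M c1 c2 c3))
        (M (M a1 b1 c1) (M a2 b2 c2) (M a3 b3 c3)).
Proof.
move=> ba1 ba2 ba3 bc1 bc2 bc3; apply: delta_alpha.
have [hm_poly _] := hm.
have -> : M (M a1 b1 c1) (M a2 b2 c2) (M a3 b3 c3) =
          m (fun i => M (mk3 a1 a2 a3 i) (mk3 b1 b2 b3 i) (mk3 c1 c2 c3 i)).
  by congr m; apply: functional_extensionality => -[[|[|[|k]]] hk].
by apply: (abelian_mal_poly hm hbeta delta_refl habel hm_poly); case=> [[|[|[|k]]] hk].
Qed.

Lemma mal_unary_poly (h : T -> T) x y z : unary_poly op h -> beta y x -> beta y z ->
  alpha (M (h x) (h y) (h z)) (h (M x y z)).
Proof.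
move=> hh yx yz; apply: delta_alpha.
exact: (abelian_mal_poly hm hbeta delta_refl habel (p := fun u : 'I_1 -> T => h (u ord0))
  (x := fun _ => x) (y := fun _ => y) (z := fun _ => z)).
Qed.

(* Within a beta-class with base point b, x + y := M x b y is, modulo alpha,
   an abelian group with neutral element b and - x := M b x b. *)
Section GroupLaws.
Variable b : T.

Local Ltac beta_class := solve [reflexivity | assumption | symmetry; assumption
  | etransitivity; [symmetry|]; eassumption].

Lemma beta_mal x y z : beta b x -> beta b y -> beta b z -> beta b (M x y z).
Proof. by move=> hx hy hz; rewrite -[b](malxyy hm b b); apply: (congruence_mal hm hbeta). Qed.

Lemma mal_addC x y : beta b x -> beta b y -> alpha (M x b y) (M y b x).
Proof.
move=> hx hy; have := @mal_medial b b x b b b y b b.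
by rewrite !(malyyx hm) !(malxyy hm); apply; beta_class.
Qed.

Lemma mal_addA x y z : beta b x -> beta b y -> beta b z ->
  alpha (M (M x b y) b z) (M x b (M y b z)).
Proof.
move=> hx hy hz; have := @mal_medial x b y b b b b b z.
by rewrite !(malyyx hm) !(malxyy hm); apply; beta_class.
Qed.

Lemma mal_addN x : beta b x -> alpha (M x b (M b x b)) b.
Proof.
move=> hx; have := @mal_medial b b x b b b b x b.
rewrite !(malyyx hm) !(malxyy hm) => ->; rewrite ?(malyyx hm) //; beta_class.
Qed.

Lemma mal_sub_add x y z : beta b x -> beta b y -> beta b z ->
  alpha (M x y z) (M x b (M z y b)).
Proof.
move=> hx hy hz; have := @mal_medial x z z z z b z y b.
by rewrite !(malyyx hm) !(malxyy hm) => medial; symmetry; apply: medial; beta_class.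
Qed.
End GroupLaws.

Hypothesis hprime : prime_quotient op alpha beta.

(* The relation "some unary polynomial maps (c, d) to (x, y) modulo alpha" is a
   congruence between alpha and beta containing (c, d), hence equal to beta. *)
Lemma cover_unary_poly c d : beta c d -> ~ alpha c d -> forall x y, beta x y ->
  exists h, [/\ unary_poly op h, alpha (h c) x & alpha (h d) y].
Proof.
move=> bcd nacd.
pose R x y := exists h, [/\ unary_poly op h, alpha (h c) x & alpha (h d) y].
have R_cong : congruence op R.
  split.
  - by move=> x; exists (fun _ => x); split; [exact: unary_poly_cst | reflexivity..].
  - move=> x y [h [hh hx hy]]; exists (fun u => M (h c) (h u) (h d)); split.
    + by apply: (unary_poly_mal hm) => //; exact: unary_poly_cst.
    + by rewrite (malyyx hm).
    + by rewrite (malxyy hm).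
  - move=> x y z [h1 [hh1 hx hy]] [h2 [hh2 hy' hz]].
    exists (fun u => M (h1 u) (h2 c) (h2 u)); split.
    + by apply: (unary_poly_mal hm) => //; exact: unary_poly_cst.
    + by rewrite (malxyy hm).
    + by rewrite hy -hy' (malyyx hm).
  - move=> i x y Rxy.
    have [hs hsP] := choice _ Rxy.
    have [_ _ _ alpha_op] := halpha.
    exists (fun u => op (fun j => hs j u)); split.
    + by apply: (poly_op (q := fun j (u : 'I_1 -> T) => hs j (u ord0))) => j; case: (hsP j).
    + by apply: alpha_op => j; case: (hsP j).
    + by apply: alpha_op => j; case: (hsP j).
have [_ _ alpha_beta _ maximal] := hprime.
have alpha_R : rle alpha R.
  by move=> x y axy; exists (fun _ => x); split; [exact: unary_poly_cst | reflexivity |].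
have R_beta : rle R beta.
  move=> x y [h [hh hx hy]].
  by rewrite -(alpha_beta _ _ hx) -(alpha_beta _ _ hy); exact: congruence_unary_poly hbeta hh bcd.
case: (maximal R R_cong alpha_R R_beta) => [R_alpha|beta_R]; last exact: beta_R.
by case: nacd; apply: R_alpha; exists id; split; [exact: unary_poly_id | reflexivity..].
Qed.

(** * Minimal sets of abelian covers have type 2 *)

Section MinimalSet.
Variables (f : T -> T) (x0 y0 : T).
Hypotheses (hf : unary_poly op f) (hx0y0 : beta x0 y0) (hfx0y0 : ~ alpha (f x0) (f y0))
 (hmin : forall g, unary_poly op g -> sep alpha beta g -> img g \subset img f -> img g = img f).
Local Notation b := (f x0).
Local Notation b' := (f y0).
Let alpha_refl x : alpha x x. Proof. reflexivity. Qed.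
Let alpha_sym x y : alpha x y -> alpha y x. Proof. exact: symmetry. Qed.
Let alpha_trans x y z : alpha x y -> alpha y z -> alpha x z. Proof. exact: transitivity. Qed.
Let beta_refl x : beta x x. Proof. reflexivity. Qed.
Let beta_sym x y : beta x y -> beta y x. Proof. exact: symmetry. Qed.
Let beta_trans x y z : beta x y -> beta y z -> beta x z. Proof. exact: transitivity. Qed.
Lemma beta_bb' : beta b b'. Proof. exact: congruence_unary_poly hbeta hf hx0y0. Qed.
Lemma beta_b_trans x y : beta b x -> beta b y -> beta x y.
Proof. by move=> bx hy; apply: beta_trans (beta_sym bx) hy. Qed.

Lemma minimal_iter_id (s g : T -> T) : unary_poly op s -> unary_poly op g ->
  img g = img f -> sep alpha beta (s \o g) -> (forall x, s x \in img f) ->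
  exists2 j, (0 < j)%N & forall u, u \in img f -> iter j s u = u.
Proof.
move=> hs hg img_g sep_sg s_img.
have sub : img (s \o g) \subset img f by apply/subsetP => _ /imsetP [x _ ->]; exact: s_img.
have img_sg := hmin (unary_poly_compose hs hg) sep_sg sub.
apply: iter_id_on_surjective => u; rewrite -{1}img_sg => /imsetP [t _ ->].
by exists (g t); first by rewrite -img_g img_f.
Qed.

(* h maps (b, b') to (x0, y0) modulo alpha, so (f \o h) \o f still separates
   beta from alpha and f \o h permutes U = img f by minimality. *)
Lemma retraction_exists : exists e,
  [/\ unary_poly op e, forall x, e x \in img f & forall u, u \in img f -> e u = u].
Proof.
have [h [hh hb hb']] := cover_unary_poly beta_bb' hfx0y0 hx0y0.
have sep_fhf : sep alpha beta ((f \o h) \o f).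
  exists x0, y0; split=> // a_fhf; apply: hfx0y0.
  apply: alpha_trans (alpha_trans _ a_fhf) _.
    exact: alpha_sym (congruence_unary_poly halpha hf hb).
  exact: congruence_unary_poly halpha hf hb'.
have [j j_gt0 hj] := minimal_iter_id (unary_poly_compose hf hh) hf (erefl _) sep_fhf
  (fun x => img_f f (h x)).
exists (iter j (f \o h)); split=> //; first exact: unary_poly_iter (unary_poly_compose hf hh).
by case: j j_gt0 {hj} => // j _ x; rewrite iterS; exact: img_f.
Qed.

Section Trace.
Variable e : T -> T.
Hypotheses (he : unary_poly op e) (e_img : forall x, e x \in img f)
  (e_id : forall u, u \in img f -> e u = u).

Definition in_trace x := (x \in img f) && pbool (beta b x).
Lemma trace_img x : in_trace x -> x \in img f. Proof. by case/andP. Qed.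
Lemma trace_beta_b x : in_trace x -> beta b x. Proof. by case/andP => _ /pboolP. Qed.
Lemma trace_b : in_trace b.
Proof. by rewrite /in_trace img_f; apply/pboolP; exact: beta_refl. Qed.
Lemma trace_b' : in_trace b'.
Proof. by rewrite /in_trace img_f; apply/pboolP; exact: beta_bb'. Qed.
Lemma beta_mal_b x y z : beta b x -> beta b y -> beta b z -> beta b (M x y z).
Proof. exact: beta_mal. Qed.
Lemma e_b : e b = b. Proof. exact: e_id (img_f f x0). Qed.
Lemma trace_e y : beta b y -> in_trace (e y).
Proof.
move=> hy; rewrite /in_trace e_img; apply/pboolP; rewrite -e_b.
exact: congruence_unary_poly hbeta he hy.
Qed.
Lemma e_trace x : in_trace x -> e x = x. Proof. by move/trace_img; exact: e_id. Qed.
Lemma e_mal_trace x y z : in_trace x -> in_trace y -> in_trace z ->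
  alpha (e (M x y z)) (M x y z).
Proof.
move=> hx hy hz; have := @mal_unary_poly e x y z he.
rewrite (e_trace hx) (e_trace hy) (e_trace hz) => h; apply: alpha_sym; apply: h;
  by apply: beta_b_trans; exact: trace_beta_b.
Qed.

Definition rep x := odflt x [pick y | in_trace y && pbool (alpha x y)].
Lemma rep_spec x : in_trace x -> in_trace (rep x) /\ alpha x (rep x).
Proof.
move=> hx; rewrite /rep; case: pickP => [y /andP [? /pboolP ?]//|].
by move/(_ x); rewrite hx /= => /negbT/pboolP; case; exact: alpha_refl.
Qed.
Lemma trace_rep x : in_trace x -> in_trace (rep x). Proof. by case/rep_spec. Qed.
Lemma rep_alpha x : in_trace x -> alpha (rep x) x. Proof. by case/rep_spec => _ /alpha_sym. Qed.
Lemma rep_eq x y : alpha x y -> in_trace x -> rep x = rep y.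
Proof.
move=> axy hx; rewrite /rep.
have -> : [pick t | in_trace t && pbool (alpha x t)] = [pick t | in_trace t && pbool (alpha y t)].
  apply: eq_pick => t /=; congr (_ && _).
  by apply/pboolP/pboolP => h; [exact: alpha_trans (alpha_sym axy) h| exact: alpha_trans axy h].
case: pickP => //= /(_ x); rewrite hx /= => /negbT/pboolP []; exact: alpha_sym.
Qed.

Hint Resolve trace_beta_b trace_b trace_b' beta_refl trace_e trace_rep beta_mal_b : trace.

#[local] Instance e_alpha_proper : Proper (alpha ==> alpha) e.
Proof. by move=> x y; exact: congruence_unary_poly halpha he. Qed.

Definition normalize (k : T -> T) : {ffun T -> T} :=
  [ffun x => if in_trace x then rep (k x) else b].
Lemma normalizeE k x : in_trace x -> normalize k x = rep (k x).
Proof. by rewrite ffunE => ->. Qed.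
Lemma normalize_ext k1 k2 : (forall x, in_trace x -> in_trace (k1 x)) ->
  (forall x, in_trace x -> alpha (k1 x) (k2 x)) -> normalize k1 = normalize k2.
Proof.
move=> hN h; apply/ffunP => x; rewrite !ffunE; case: ifP => // hx.
exact: rep_eq (h x hx) (hN x hx).
Qed.

(* The scalars: unary polynomials mapping the trace into itself and b into
   its alpha-class, up to alpha on the trace.  [normalize] picks the fixed
   representatives [rep] of alpha-classes, so that scalars form a finite type
   with Leibniz equality. *)
Definition is_endo (g : {ffun T -> T}) := exists k,
  [/\ unary_poly op k, (forall x, in_trace x -> in_trace (k x)), alpha (k b) b &
      g = normalize k].
Definition endo := {g : {ffun T -> T} | pbool (is_endo g)}.

Lemma endoP (g : endo) : exists k,
  [/\ unary_poly op k, (forall x, in_trace x -> in_trace (k x)), alpha (k b) b &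
      forall x, in_trace x -> alpha (val g x) (k x)].
Proof.
case: g => g /= /pboolP [k [hk hN hb0 ->]]; exists k; split=> // x hx.
by rewrite normalizeE //; apply: rep_alpha; auto.
Qed.
Lemma endo_trace (g : endo) x : in_trace x -> in_trace (val g x).
Proof.
case: g => g /= /pboolP [k [hk hN hb0 ->]] hx; rewrite normalizeE //; auto with trace.
Qed.
Hint Resolve endo_trace : trace.
Lemma endo_alpha (g : endo) x y : in_trace x -> in_trace y -> alpha x y -> val g x = val g y.
Proof.
case: g => g /= /pboolP [k [hk hN hb0 ->]] hx hy axy.
rewrite !normalizeE //; apply: rep_eq; [exact: congruence_unary_poly halpha hk axy| exact: hN].
Qed.
Lemma endo_b (g : endo) : alpha (val g b) b.
Proof. have [k [_ _ hb0 hg]] := endoP g; exact: alpha_trans (hg _ trace_b) hb0. Qed.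
Lemma endo_normalize (g : endo) : val g = normalize (val g).
Proof.
case: g => g /= /pboolP [k [hk hN hb0 ->]]; apply/ffunP => x; rewrite [RHS]ffunE.
case: ifP => hx; last by rewrite ffunE hx.
rewrite normalizeE //; apply: rep_eq; [apply: alpha_sym; apply: rep_alpha|]; auto with trace.
Qed.
Lemma endo_eq (g h : endo) : (forall x, in_trace x -> alpha (val g x) (val h x)) -> g = h.
Proof.
move=> e1; apply: val_inj; rewrite endo_normalize [RHS]endo_normalize; apply: normalize_ext => //.
exact: endo_trace.
Qed.

Lemma is_endo_normalize k k' : unary_poly op k -> (forall x, in_trace x -> in_trace (k x)) ->
  alpha (k b) b -> (forall x, in_trace x -> alpha (k x) (k' x)) ->
  pbool (is_endo (normalize k')).
Proof.
move=> hk hN hb0 hkk; apply/pboolP; exists k; split=> //.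
by apply: esym; apply: normalize_ext.
Qed.

Lemma endo_rep (g : endo) y : in_trace y -> val g (rep y) = val g y.
Proof. move=> hy; apply: endo_alpha; auto with trace; exact: rep_alpha. Qed.

Lemma endo0_proof : pbool (is_endo (normalize (fun _ => b))).
Proof.
by apply: (is_endo_normalize (k := fun _ => b)) => [|*|*|*];
  [exact: unary_poly_cst | exact: trace_b | exact: alpha_refl | exact: alpha_refl].
Qed.
Definition endo0 : endo := exist (fun g => pbool (is_endo g)) _ endo0_proof.
Lemma endo1_proof : pbool (is_endo (normalize id)).
Proof.
by apply: (is_endo_normalize (k := id)) => [|//||*]; [exact: unary_poly_id | exact: alpha_refl..].
Qed.
Definition endo1 : endo := exist (fun g => pbool (is_endo g)) _ endo1_proof.

Lemma endo_add_proof (g h : endo) :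
  pbool (is_endo (normalize (fun x => e (M (val g x) b (val h x))))).
Proof.
have [kg [hkg hNg hbg hg]] := endoP g; have [kh [hkh hNh hbh hh]] := endoP h.
apply: (is_endo_normalize (k := fun x => e (M (kg x) b (kh x)))).
- apply: (unary_poly_compose he); apply: (unary_poly_mal hm) => //; exact: unary_poly_cst.
- by move=> x hx; apply: trace_e; apply: beta_mal_b; auto with trace.
- by setoid_rewrite hbg; setoid_rewrite hbh; rewrite (malxyy hm) e_b; exact: alpha_refl.
- by move=> x hx; setoid_rewrite <- hg; [setoid_rewrite <- hh|]; auto; reflexivity.
Qed.
Definition endo_add (g h : endo) : endo :=
  exist (fun g => pbool (is_endo g)) _ (endo_add_proof g h).

Lemma endo_opp_proof (g : endo) : pbool (is_endo (normalize (fun x => e (M b (val g x) b)))).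
Proof.
have [kg [hkg hNg hbg hg]] := endoP g.
apply: (is_endo_normalize (k := fun x => e (M b (kg x) b))).
- apply: (unary_poly_compose he); apply: (unary_poly_mal hm) => //; exact: unary_poly_cst.
- by move=> x hx; apply: trace_e; apply: beta_mal_b; auto with trace.
- by setoid_rewrite hbg; rewrite (malxyy hm) e_b; exact: alpha_refl.
- by move=> x hx; setoid_rewrite <- hg; auto; reflexivity.
Qed.
Definition endo_opp (g : endo) : endo := exist (fun g => pbool (is_endo g)) _ (endo_opp_proof g).

Lemma endo_mul_proof (g h : endo) : pbool (is_endo (normalize (fun x => val g (val h x)))).
Proof.
have [kg [hkg hNg hbg hg]] := endoP g; have [kh [hkh hNh hbh hh]] := endoP h.
apply: (is_endo_normalize (k := fun x => kg (kh x))).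
- exact: unary_poly_compose hkg hkh.
- by move=> x hx; apply: hNg; apply: hNh.
- exact: alpha_trans (congruence_unary_poly halpha hkg hbh) hbg.
- move=> x hx; apply: alpha_trans _ (alpha_sym (hg _ (endo_trace h hx))).
  apply: congruence_unary_poly halpha hkg _; apply: alpha_sym; exact: hh.
Qed.
Definition endo_mul (g h : endo) : endo :=
  exist (fun g => pbool (is_endo g)) _ (endo_mul_proof g h).

Lemma endo0E x : in_trace x -> val endo0 x = rep b. Proof. exact: normalizeE. Qed.
Lemma endo1E x : in_trace x -> val endo1 x = rep x. Proof. exact: normalizeE. Qed.
Lemma endo_addE g h x : in_trace x -> val (endo_add g h) x = rep (e (M (val g x) b (val h x))).
Proof. exact: normalizeE. Qed.
Lemma endo_oppE g x : in_trace x -> val (endo_opp g) x = rep (e (M b (val g x) b)).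
Proof. exact: normalizeE. Qed.
Lemma endo_mulE g h x : in_trace x -> val (endo_mul g h) x = rep (val g (val h x)).
Proof. exact: normalizeE. Qed.

Definition near_trace y := exists z, in_trace z /\ alpha y z.
Lemma near_trace_trace y : in_trace y -> near_trace y.
Proof. by move=> h; exists y; split=> //; exact: alpha_refl. Qed.
Lemma e_alpha_near y : near_trace y -> alpha (e y) y.
Proof.
case=> z [hz ayz]; apply: alpha_trans (congruence_unary_poly halpha he ayz) _.
by rewrite e_trace //; exact: alpha_sym.
Qed.
Lemma near_trace_mal x y z : near_trace x -> near_trace y -> near_trace z -> near_trace (M x y z).
Proof.
case=> x' [hx ax] [y' [hy ay]] [z' [hz az]].
exists (e (M x' y' z')); split; first by apply: trace_e; apply: beta_mal_b; auto with trace.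
apply: alpha_trans (congruence_mal hm halpha ax ay az) _; apply: alpha_sym; apply: e_alpha_near.
exists (e (M x' y' z')); split; first by apply: trace_e; apply: beta_mal_b; auto with trace.
apply: alpha_sym; exact: e_mal_trace.
Qed.
Lemma near_trace_e y : near_trace y -> near_trace (e y).
Proof.
by move=> h; case: (h) => z [hz ayz]; exists z; split=> //; exact: alpha_trans (e_alpha_near h) ayz.
Qed.
Lemma trace_rep_near y : near_trace y -> in_trace (rep y).
Proof. case=> z [hz ayz]; rewrite -(rep_eq (alpha_sym ayz) hz); exact: trace_rep. Qed.
Lemma rep_alpha_near y : near_trace y -> alpha (rep y) y.
Proof.
case=> z [hz ayz]; rewrite -(rep_eq (alpha_sym ayz) hz).
exact: alpha_trans (rep_alpha hz) (alpha_sym ayz).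
Qed.
Lemma near_trace_rep y : near_trace y -> near_trace (rep y).
Proof. by move=> h; apply: near_trace_trace; apply: trace_rep_near. Qed.
Lemma near_trace_endo (g : endo) x : in_trace x -> near_trace (val g x).
Proof. by move=> h; apply: near_trace_trace; apply: endo_trace. Qed.
Hint Resolve near_trace_trace near_trace_mal near_trace_e near_trace_rep near_trace_endo : trace.

Local Ltac rw_rep := setoid_rewrite rep_alpha_near; [| solve [auto 20 with trace] ..].
Local Ltac rw_e := setoid_rewrite e_alpha_near; [| solve [auto 20 with trace] ..].
Local Ltac drop_rep_e := repeat rw_rep; repeat rw_e.

Lemma endo_addA : associative endo_add.
Proof.
move=> g h i; apply: endo_eq => x hx; rewrite !endo_addE; auto with trace.
drop_rep_e; symmetry; apply: mal_addA; auto with trace.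
Qed.
Lemma endo_addC : commutative endo_add.
Proof.
move=> g h; apply: endo_eq => x hx; rewrite !endo_addE; auto with trace.
drop_rep_e; apply: mal_addC; auto with trace.
Qed.
Lemma endo_add0 : left_id endo0 endo_add.
Proof.
move=> g; apply: endo_eq => x hx; rewrite !endo_addE ?endo0E; auto with trace.
drop_rep_e; rewrite (malyyx hm); reflexivity.
Qed.
Lemma endo_addN : left_inverse endo0 endo_opp endo_add.
Proof.
move=> g; apply: endo_eq => x hx; rewrite !endo_addE ?endo_oppE ?endo0E; auto with trace.
drop_rep_e; apply: alpha_trans (@mal_addC b _ _ _ _) (@mal_addN b _ _); auto with trace.
Qed.
Lemma endo_mulA : associative endo_mul.
Proof.
move=> g h i; apply: endo_eq => x hx; rewrite !endo_mulE ?endo_rep; auto with trace.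
drop_rep_e; reflexivity.
Qed.
Lemma endo_mul1 : left_id endo1 endo_mul.
Proof.
move=> g; apply: endo_eq => x hx; rewrite !endo_mulE ?endo1E; auto with trace.
drop_rep_e; reflexivity.
Qed.
Lemma endo_mulr1 : right_id endo1 endo_mul.
Proof.
move=> g; apply: endo_eq => x hx; rewrite !endo_mulE ?endo1E ?endo_rep; auto with trace.
drop_rep_e; reflexivity.
Qed.
Lemma endo_mulDl : left_distributive endo_mul endo_add.
Proof.
move=> g h i; apply: endo_eq => x hx; rewrite !endo_mulE ?endo_addE ?endo_mulE; auto with trace.
drop_rep_e; reflexivity.
Qed.
Lemma endo_additive (g : endo) u v : in_trace u -> in_trace v ->
  alpha (val g (e (M u b v))) (M (val g u) b (val g v)).
Proof.
move=> hu hv; have [kg [hkg hNg hbg hg]] := endoP g.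
have hN : in_trace (e (M u b v)) by apply: trace_e; auto with trace.
apply: alpha_trans (hg _ hN) _.
apply: alpha_trans (congruence_unary_poly halpha hkg (e_alpha_near _)) _.
  by auto 20 with trace.
apply: alpha_trans (alpha_sym (mal_unary_poly hkg _ _)) _;
  try by apply: beta_b_trans; auto with trace.
by apply: (congruence_mal hm halpha); [apply: alpha_sym; exact: hg | exact: hbg |
  apply: alpha_sym; exact: hg].
Qed.
Lemma endo_mulDr : right_distributive endo_mul endo_add.
Proof.
move=> g h i; apply: endo_eq => x hx.
rewrite !endo_mulE ?endo_addE ?endo_mulE ?endo_rep; auto 20 with trace.
drop_rep_e; apply: alpha_trans (endo_additive _ _ _) _; auto with trace.
by symmetry; apply: e_alpha_near; auto 20 with trace.
Qed.
Lemma endo1_neq0 : endo1 != endo0.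
Proof.
apply/negP => /eqP e1; have := congr1 (fun g : endo => val g b') e1.
rewrite /= endo1E ?endo0E; auto with trace => e2.
apply: hfx0y0; have h := alpha_sym (rep_alpha trace_b'); rewrite e2 in h.
exact: alpha_sym (alpha_trans h (rep_alpha trace_b)).
Qed.

(* By minimality of U, a scalar either collapses the trace into the alpha-class
   of b, or (composed with e) permutes U and is thus injective modulo alpha. *)
Lemma endo0_or_injective (g : endo) :
  g = endo0 \/ (forall x y, in_trace x -> in_trace y -> alpha (val g x) (val g y) -> alpha x y).
Proof.
have [k [hk k_trace hkb hg]] := endoP g.
have ekE z : in_trace z -> (e \o k) z = k z by move=> hz; exact: e_trace (k_trace _ hz).
have img_e : img e = img f.
  apply/setP => u; apply/imsetP/idP => [[x _ ->] | fu]; first exact: e_img.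
  by exists u; rewrite ?e_id.
case: (classic (sep alpha beta ((e \o k) \o e))) => [hs|hns].
- right => x y hx hy gxy.
  have [[|j] // _ hj] :=
    minimal_iter_id (unary_poly_compose he hk) he img_e hs (fun z => e_img (k z)).
  rewrite -(hj _ (trace_img hx)) -(hj _ (trace_img hy)) !iterSr.
  apply: congruence_iter halpha (unary_poly_compose he hk) _.
  rewrite !ekE //; exact: alpha_trans (alpha_sym (hg _ hx)) (alpha_trans gxy (hg _ hy)).
- left; apply: endo_eq => x hx; rewrite endo0E //.
  have kbx : alpha (k b) (k x).
    apply: NNPP => nkbx; apply: hns; exists b, x; split; first exact: trace_beta_b.
    rewrite /= (e_trace trace_b) (e_trace hx).
    by rewrite (e_trace (k_trace _ trace_b)) (e_trace (k_trace _ hx)).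
  apply: alpha_trans (hg _ hx) _; apply: alpha_trans (alpha_sym kbx) _.
  exact: alpha_trans hkb (alpha_sym (rep_alpha trace_b)).
Qed.

Lemma endo_mul_eq0 (g h : endo) : endo_mul g h = endo0 -> g = endo0 \/ h = endo0.
Proof.
move=> gh; case: (endo0_or_injective g) => [-> | inj]; [by left| right].
apply: endo_eq => x hx; rewrite endo0E //.
have := congr1 (fun k : endo => val k x) gh; rewrite /= endo_mulE // endo0E // => e1.
have a1 : alpha (val g (val h x)) (val g b).
  apply: alpha_trans (alpha_sym (rep_alpha _)) _; first by auto with trace.
  rewrite e1; apply: alpha_trans (rep_alpha trace_b) _; apply: alpha_sym; exact: endo_b.
have := inj _ _ (endo_trace h hx) trace_b a1 => a2.
apply: alpha_trans a2 (alpha_sym (rep_alpha trace_b)).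
Qed.
Definition scalar : finFieldType :=
  fin_domain_field endo_addA endo_addC endo_add0 endo_addN endo_mulA endo_mul1 endo_mulr1
    endo_mulDl endo_mulDr endo1_neq0 endo_mul_eq0.
Definition to_endo (g : scalar) : endo := g.
(* The trace modulo alpha is one-dimensional: g |-> g b' identifies it with
   the scalars. *)
Definition vec (g : scalar) : T := val (to_endo g) b'.

Local Open Scope ring_scope.
Lemma scalar_addE (g h : scalar) : to_endo (g + h) = endo_add (to_endo g) (to_endo h).
Proof. exact: erefl. Qed.
Lemma scalar_mulE (g h : scalar) : to_endo (g * h) = endo_mul (to_endo g) (to_endo h).
Proof. exact: erefl. Qed.
Lemma scalar_oppE (g : scalar) : to_endo (- g) = endo_opp (to_endo g).
Proof. exact: erefl. Qed.
Lemma scalar0E : to_endo 0 = endo0. Proof. exact (erefl endo0). Qed.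
Definition of_endo (g : endo) : scalar := g.
Lemma to_endoK g : to_endo (of_endo g) = g. Proof. exact (erefl g). Qed.
Lemma of_endoK g : of_endo (to_endo g) = g. Proof. exact (erefl g). Qed.
#[local] Opaque scalar.

Lemma endo_add_b' (g h : endo) : alpha (val (endo_add g h) b') (M (val g b') b (val h b')).
Proof. rewrite endo_addE; auto with trace; drop_rep_e; reflexivity. Qed.
Lemma endo_mul_b' (g h : endo) : alpha (val (endo_mul g h) b') (val g (val h b')).
Proof. rewrite endo_mulE; auto with trace; drop_rep_e; reflexivity. Qed.
Lemma endo_sub_eq0 (g h : endo) : alpha (val g b') (val h b') -> endo_add g (endo_opp h) = endo0.
Proof.
move=> agh; case: (endo0_or_injective (endo_add g (endo_opp h))) => [//|inj].
exfalso; apply: hfx0y0.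
apply: alpha_sym; apply: inj; [exact: trace_b'| exact: trace_b|].
apply: alpha_trans _ (alpha_sym (endo_b _)).
rewrite endo_addE ?endo_oppE; auto with trace; drop_rep_e.
apply: alpha_trans _ (mal_addN (x := val h b') _); last by auto with trace.
apply: (congruence_mal hm halpha); [exact: agh| exact: alpha_refl| exact: alpha_refl].
Qed.
Lemma vec_trace g : in_trace (vec g). Proof. exact: endo_trace trace_b'. Qed.
Hint Resolve vec_trace : trace.
Lemma vec_add (g h : scalar) : alpha (vec (g + h)) (M (vec g) b (vec h)).
Proof. rewrite /vec scalar_addE; exact: endo_add_b'. Qed.
Lemma vec_mul (g h : scalar) : alpha (vec (g * h)) (val (to_endo g) (vec h)).
Proof. rewrite /vec scalar_mulE; exact: endo_mul_b'. Qed.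
Lemma vec_inj (g h : scalar) : alpha (vec g) (vec h) -> g = h.
Proof.
move=> agh; apply: subr0_eq; have := endo_sub_eq0 agh.
by rewrite -scalar_oppE -scalar_addE -scalar0E => /(congr1 of_endo); rewrite !of_endoK.
Qed.

Lemma vec_onto y : in_trace y -> exists g : scalar, alpha (vec g) y.
Proof.
move=> hy.
have gby : beta b y by move: hy => /andP [_ /pboolP].
have [h [hh h1 h2]] := cover_unary_poly beta_bb' hfx0y0 gby.
have sub : rle alpha beta by case: hprime.
have pr : pbool (is_endo (normalize (fun x => e (h x)))).
  apply: (is_endo_normalize (k := fun x => e (h x))).
  - exact: unary_poly_compose he hh.
  - move=> x hx; apply: trace_e.
    apply: beta_trans (sub _ _ (alpha_sym h1)) (congruence_unary_poly hbeta hh (trace_beta_b hx)).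
  - rewrite -{2}e_b; exact: congruence_unary_poly halpha he h1.
  - move=> *; exact: alpha_refl.
exists (of_endo (exist (fun g => pbool (is_endo g)) _ pr)).
rewrite /vec to_endoK /= normalizeE; auto with trace.
apply: alpha_trans (rep_alpha_near _) _; first by apply: near_trace_e; exists y.
rewrite -(e_trace hy); exact: congruence_unary_poly halpha he h2.
Qed.

Definition coord (y : T) : scalar := odflt 0 [pick g : scalar | pbool (alpha (vec g) y)].
Lemma coord_vec y : in_trace y -> alpha (vec (coord y)) y.
Proof.
move=> hy; rewrite /coord; case: pickP => [g /pboolP //|].
by have [g hg] := vec_onto hy; move/(_ g); move/pboolP: hg => ->.
Qed.
Lemma coord_eq y g : in_trace y -> alpha (vec g) y -> coord y = g.
Proof. move=> hy hg; apply: vec_inj; exact: alpha_trans (coord_vec hy) (alpha_sym hg). Qed.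

Lemma in_traceE x : in_trace x <-> (x \in img f /\ beta b x).
Proof. by rewrite /in_trace; split=> [/andP [h /pboolP] | [-> /pboolP]]. Qed.

Lemma vec_mul_coord (c : scalar) y : in_trace y ->
  alpha (vec (c * coord y)) (val (to_endo c) y).
Proof.
move=> hy; apply: alpha_trans (vec_mul _ _) _.
by rewrite (endo_alpha _ (vec_trace _) hy (coord_vec hy)).
Qed.

Lemma vec_sum n (a : nat -> T) (v : scalar) (t : 'I_n -> scalar) :
  alpha (a 0%N) (vec v) ->
  (forall j (hj : (j < n)%N), alpha (a j.+1) (M (a j) b (vec (t (Ordinal hj))))) ->
  alpha (a n) (vec (v + \sum_(i < n) t i)).
Proof.
move=> a0 aS; rewrite (eq_bigl (fun i : 'I_n => (i < n)%N)) => [|i]; last by rewrite ltn_ord.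
suff partial j : (j <= n)%N -> alpha (a j) (vec (v + \sum_(i < n | (i < j)%N) t i)).
  exact: partial.
elim: j => [_|j IH hj]; first by rewrite big_pred0 // addr0.
rewrite (sum_ord_ltS _ hj) addrA; apply: alpha_trans (aS j hj) _.
apply: alpha_trans _ (alpha_sym (vec_add _ _)).
by apply: (congruence_mal hm halpha); [exact: IH (ltnW hj) | exact: alpha_refl..].
Qed.

(* Moving the arguments of p from b to x one coordinate at a time, each step
   adds, by the affine behaviour of M, the value at x i of the i-th slice. *)
Section PolyOnTrace.
Variables (n : nat) (p : ('I_n -> T) -> T).
Hypotheses (hp : is_poly op p)
  (p_trace : forall x, (forall i, in_trace (x i)) -> in_trace (p x)).

Definition point_at (i : 'I_n) u : 'I_n -> T := fun j => if j == i then u else b.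
Definition prefix (x : 'I_n -> T) j : 'I_n -> T := fun i => if (i < j)%N then x i else b.

Lemma trace_point_at i u : in_trace u -> forall j, in_trace (point_at i u j).
Proof. by move=> hu j; rewrite /point_at; case: (j == i) => //; exact: trace_b. Qed.

Lemma trace_prefix x j : (forall i, in_trace (x i)) -> forall i, in_trace (prefix x j i).
Proof. by move=> hx i; rewrite /prefix; case: ifP => // _; exact: trace_b. Qed.

Definition slice i u := e (M (p (point_at i u)) (p (fun _ => b)) b).

Lemma slice_proof i : pbool (is_endo (normalize (slice i))).
Proof.
have p_b : in_trace (p (fun _ => b)) by apply: p_trace => _; exact: trace_b.
apply: (is_endo_normalize (k := slice i)); last by move=> *; exact: alpha_refl.
- apply: (unary_poly_compose he); apply: (unary_poly_mal hm); [|exact: unary_poly_cst..].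
  apply: (poly_comp (q := fun j (y : 'I_1 -> T) => point_at i (y ord0) j) hp) => j.
  by rewrite /point_at; case: (j == i); [exact: poly_proj | exact: poly_cst].
- by move=> u hu; apply: trace_e; apply: beta_mal_b; auto using trace_point_at with trace.
- rewrite /slice; have -> : point_at i b = (fun _ => b).
    by apply: functional_extensionality => j; rewrite /point_at; case: (j == i).
  by rewrite (malyyx hm) e_b; exact: alpha_refl.
Qed.

Definition slice_scalar i : scalar :=
  of_endo (exist (fun g => pbool (is_endo g)) _ (slice_proof i)).

Lemma prefix_step x j (hj : (j < n)%N) : (forall i, in_trace (x i)) ->
  alpha (p (prefix x j.+1))
        (M (p (prefix x j)) b (vec (slice_scalar (Ordinal hj) * coord (x (Ordinal hj))))).
Proof.
move=> hx; set o := Ordinal hj.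
have p_b : in_trace (p (fun _ => b)) by apply: p_trace => _; exact: trace_b.
have -> : prefix x j.+1 = fun i => M (prefix x j i) b (point_at o (x o) i).
  apply: functional_extensionality => i; rewrite /prefix /point_at -val_eqE /=.
  case: (ltngtP i j) => h.
  - by rewrite ltnS (ltnW h) (malxyy hm).
  - by rewrite ltnNge h (malxyy hm).
  - have -> : i = o by apply: val_inj.
    by rewrite /= ltnSn (malyyx hm).
have slice_o : alpha (vec (slice_scalar o * coord (x o)))
                     (M (p (point_at o (x o))) (p (fun _ => b)) b).
  apply: alpha_trans (vec_mul_coord _ (hx o)) _.
  rewrite /slice_scalar to_endoK /= normalizeE //.
  apply: alpha_trans (rep_alpha_near _) (e_alpha_near _);
    by auto 20 using trace_point_at with trace.
have abelian := abelian_mal_poly hm (x := prefix x j) (y := fun _ => b) (z := point_at o (x o))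
  hbeta delta_refl habel hp.
apply: alpha_trans (alpha_sym (delta_alpha (abelian _ _))) _;
  try by move=> i; apply: beta_b_trans; auto using trace_prefix, trace_point_at with trace.
apply: alpha_trans (@mal_sub_add b _ _ _ _ _ _) _;
  auto using trace_prefix, trace_point_at with trace.
by apply: (congruence_mal hm halpha); [exact: alpha_refl.. | exact: alpha_sym slice_o].
Qed.

Lemma poly_affine_on_trace : exists (c : 'I_n -> scalar) (v0 : scalar),
  forall x, (forall i, in_trace (x i)) -> coord (p x) = v0 + \sum_(i < n) c i * coord (x i).
Proof.
exists slice_scalar, (coord (p (fun _ => b))) => x hx.
apply: coord_eq; first exact: p_trace.
have prefix0 : prefix x 0 = (fun _ => b) by apply: functional_extensionality.
have prefixn : prefix x n = x.
  by apply: functional_extensionality => i; rewrite /prefix ltn_ord.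
apply: alpha_sym; rewrite -[X in alpha (p X) _]prefixn.
apply: (vec_sum (a := fun j => p (prefix x j))).
  by rewrite prefix0; apply: alpha_sym; apply: coord_vec; apply: p_trace => _; exact: trace_b.
by move=> j hj; exact: prefix_step.
Qed.

End PolyOnTrace.

Fixpoint affine_partial n (k : 'I_n -> T -> T) (w0 : T) (j : nat) (x : 'I_n -> T) : T :=
  if j is j'.+1 then
    if insub j' is Some i then e (M (affine_partial k w0 j' x) b (k i (x i)))
    else affine_partial k w0 j' x
  else w0.

Lemma poly_affine_partial n (k : 'I_n -> T -> T) w0 j :
  (forall i, unary_poly op (k i)) -> is_poly op (affine_partial k w0 j).
Proof.
move=> hk; elim: j => [|j IH] /=; first exact: poly_cst.
case: (insub j) => [i|] //; apply: poly_unary_comp he _.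
apply: (poly_mal hm) => //; first exact: poly_cst.
by apply: poly_unary_comp (hk i) _; exact: poly_proj.
Qed.

Lemma trace_affine_partial n (k : 'I_n -> T -> T) w0 j x : in_trace w0 ->
  (forall i u, in_trace u -> in_trace (k i u)) -> (forall i, in_trace (x i)) ->
  in_trace (affine_partial k w0 j x).
Proof.
move=> hw0 hk hx; elim: j => [|j IH] //=; case: (insub j) => [i|] //.
by apply: trace_e; apply: beta_mal_b; auto with trace.
Qed.

Lemma affine_map_poly n (c : 'I_n -> scalar) (v0 : scalar) :
  exists p : ('I_n -> T) -> T, [/\ is_poly op p,
    (forall x, (forall i, in_trace (x i)) -> in_trace (p x)) &
    forall x, (forall i, in_trace (x i)) -> coord (p x) = v0 + \sum_(i < n) c i * coord (x i)].
Proof.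
have [k hk] := choice _ (fun i => endoP (to_endo (c i))).
have k_trace i u : in_trace u -> in_trace (k i u) by case: (hk i) => _ + _ _; apply.
have p_trace x : (forall i, in_trace (x i)) -> in_trace (affine_partial k (vec v0) n x).
  by move=> hx; exact: trace_affine_partial (vec_trace v0) k_trace hx.
exists (affine_partial k (vec v0) n); split; [|exact: p_trace|].
  by apply: poly_affine_partial => i; case: (hk i).
move=> x hx; apply: coord_eq; first exact: p_trace.
apply: alpha_sym; apply: (vec_sum (a := fun j => affine_partial k (vec v0) j x)).
  exact: alpha_refl.
move=> j hj /=; rewrite insubT /=.
have hj' := trace_affine_partial j (vec_trace v0) k_trace hx.
apply: alpha_trans (e_alpha_near _) _; first by auto with trace.
apply: (congruence_mal hm halpha); [exact: alpha_refl | exact: alpha_refl |].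
case: (hk (Ordinal hj)) => _ _ _ ck; apply: alpha_trans (alpha_sym (ck _ (hx _))) _.
exact: alpha_sym (vec_mul_coord _ (hx _)).
Qed.

Lemma trace_vector_space :
  induced_is_vector_space op alpha (fun x => x \in img f /\ beta b x).
Proof.
have NP x : x \in img f /\ beta b x <-> in_trace x by rewrite in_traceE.
exists scalar, scalar^o, coord; split.
- move=> x y /NP hx /NP hy; split => [e1|a1].
  + apply: alpha_trans (alpha_sym (coord_vec hx)) _; rewrite e1; exact: coord_vec hy.
  + by apply: esym; apply: coord_eq => //; exact: alpha_trans (coord_vec hx) a1.
- move=> v; exists (vec v); split; first exact/NP/vec_trace.
  by apply: coord_eq; [exact: vec_trace | exact: alpha_refl].
- move=> n p hp p_N.
  have p_trace x : (forall i, in_trace (x i)) -> in_trace (p x).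
    by move=> hx; apply/NP; apply: p_N => i; apply/NP.
  have [c [v0 hc]] := poly_affine_on_trace hp p_trace.
  by exists c, v0 => x hx; rewrite hc // => i; exact/NP.
- move=> n c v0; have [p [hp p_trace hc]] := affine_map_poly c v0.
  exists p; split; first exact: hp.
  + by move=> x hx; apply/NP; apply: p_trace => i; exact/NP.
  + by move=> x hx; rewrite hc // => i; exact/NP.
Qed.

Lemma type2_via_trace : type2 op alpha beta /\ minimal_set op alpha beta (img f).
Proof.
have hms : minimal_set op alpha beta (img f).
  split; last exact: hmin.
  by exists f; split=> //; exists x0, y0; split.
split; last exact: hms; split; first exact: hprime.
exists (img f), (fun x => x \in img f /\ beta b x).
split; [exact: hms | | exact: trace_vector_space].
exists b; split; [exact: img_f | by [] |].
by exists b, b'; split; [apply/in_traceE; exact: trace_b | apply/in_traceE; exact: trace_b' |].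
Qed.
End Trace.

Lemma minimal_set_type2 : type2 op alpha beta /\ minimal_set op alpha beta (img f).
Proof. by have [e [he e_img e_id]] := retraction_exists; exact: type2_via_trace he e_img e_id. Qed.

End MinimalSet.

Lemma abelian_cover_type2 : exists U b b',
  [/\ type2_minimal_set op U, b \in U, b' \in U, beta b b' & ~ alpha b b'].
Proof.
have [_ _ _ beta_not_alpha _] := hprime.
have [f [x0 [y0 [hf bxy nxy fmin]]]] := minimal_set_exists op beta_not_alpha.
have [t2 ms] := minimal_set_type2 hf bxy nxy fmin.
exists (img f), (f x0), (f y0).
split; [by exists alpha, beta | exact: img_f | exact: img_f | | exact: nxy].
exact: congruence_unary_poly hbeta hf bxy.
Qed.
End AbelianCover.

(** * Spreads along the derived series *)

Section Commutator.
Variables (T : finType) (I : Type) (ar : I -> nat)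
          (op : forall i : I, ('I_(ar i) -> T) -> T).

Lemma congruence_commutator (a c : T -> T -> Prop) : congruence op (commutator op a c).
Proof.
split.
- by move=> x d [d_refl _ _ _] _.
- by move=> x y axy d hd hC; case: (hd) => _ d_sym _ _; exact: d_sym (axy d hd hC).
- move=> x y z axy ayz d hd hC; case: (hd) => _ _ d_trans _.
  exact: d_trans (axy d hd hC) (ayz d hd hC).
- by move=> i x y axy d hd hC; case: (hd) => _ _ _ d_op; apply: d_op => j; exact: axy.
Qed.

Lemma centralizes_commutator (a c : T -> T -> Prop) : centralizes op a c (commutator op a c).
Proof.
move=> k n t ht a1 b1 c1 d1 hab hcd h d hd hC.
exact: hC k n t ht a1 b1 c1 d1 hab hcd (h d hd hC).
Qed.

Lemma centralizes_le (a c d a' c' : T -> T -> Prop) : centralizes op a c d ->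
  rle a' a -> rle c' c -> centralizes op a' c' d.
Proof.
move=> hC ha hc k n t ht a1 b1 c1 d1 hab hcd.
by apply: (hC _ _ _ ht) => [i|j]; [exact: ha | exact: hc].
Qed.

Lemma commutator_le (a c : T -> T -> Prop) : congruence op c -> rle (commutator op a c) c.
Proof.
move=> hc x y; apply => // k n t [tt [_ htt]] a1 b1 c1 d1 _ hcd _.
have [c_refl _ _ _] := hc.
apply: (congruence_poly (p := t) hc); first by exists tt.
by move=> i; rewrite /join_args; case: (split i).
Qed.

Lemma congruence_derived j : congruence op (derived op j).
Proof. by case: j => [|j]; [split | exact: congruence_commutator]. Qed.

End Commutator.

Section Spread.
Variables (T : finType) (I : Type) (ar : I -> nat)
          (op : forall i : I, ('I_(ar i) -> T) -> T).

Definition spread_mod (theta : T -> T -> Prop) :=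
  exists k (p : ('I_k -> T) -> T) (Us : 'I_k -> {set T}),
  [/\ is_poly op p, (forall i, type2_minimal_set op (Us i)) &
      forall a, exists u : 'I_k -> T, (forall i, u i \in Us i) /\ theta (p u) a].

Lemma spread_mod_le theta theta' : spread_mod theta -> rle theta theta' -> spread_mod theta'.
Proof.
move=> [k [p [Us [hp hUs hspread]]]] le_theta; exists k, p, Us; split=> // a.
by have [u [hu hpu]] := hspread a; exists u; split=> //; exact: le_theta.
Qed.

Lemma spread_mod_total : 0 < #|T| -> spread_mod (fun _ _ => True).
Proof.
case/card_gt0P => a0 _; exists 0%N, (fun _ => a0), (fun _ => set0).
by split=> [|[]//|a]; [exact: poly_cst | exists (fun _ => a0); split=> // -[]].
Qed.

Definition rel_card (R : T -> T -> Prop) := #|[set z : T * T | pbool (R z.1 z.2)]|.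

Lemma rel_card_ge R S : rle R S -> (rel_card S <= rel_card R)%N -> rle S R.
Proof.
move=> RS card_SR x y Sxy.
have /eqP eqRS : [set z : T * T | pbool (R z.1 z.2)] == [set z | pbool (S z.1 z.2)].
  rewrite eqEcard card_SR andbT; apply/subsetP => z; rewrite !inE => /pboolP Rz.
  by apply/pboolP; exact: RS.
have : (x, y) \in [set z : T * T | pbool (S z.1 z.2)] by rewrite inE; apply/pboolP.
by rewrite -eqRS inE => /pboolP.
Qed.

Lemma cover_exists rho theta : congruence op rho -> congruence op theta ->
  rle rho theta -> ~ rle theta rho ->
  exists eta, [/\ congruence op eta, prime_quotient op rho eta & rle eta theta].
Proof.
move=> hrho htheta rho_theta theta_rho.
pose P k := pbool (exists eta, [/\ congruence op eta, rle rho eta, rle eta theta,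
                                   ~ rle eta rho & rel_card eta = k]).
have [|k /pboolP [eta [heta rho_eta eta_theta eta_rho <-]] min_eta] := @ex_minnP P.
  by exists (rel_card theta); apply/pboolP; exists theta; split.
exists eta; split=> //; split=> // gamma hgamma rho_gamma gamma_eta.
case: (classic (rle gamma rho)) => [|gamma_rho]; [by left | right].
apply: rel_card_ge => //; apply: min_eta; apply/pboolP; exists gamma; split=> //.
by move=> x y /gamma_eta; exact: eta_theta.
Qed.

Variable m : ('I_3 -> T) -> T.
Hypothesis hm : maltsev_poly op m.
Local Notation M := (mal m).

Fixpoint correct K (hs : 'I_K -> T -> T) (b : T) (j : nat) (x : T) (w : 'I_K -> T) : T :=
  if j is j'.+1 then
    if insub j' is Some i then M (correct hs b j' x w) (hs i b) (hs i (w i))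
    else correct hs b j' x w
  else x.

Lemma poly_correct K (hs : 'I_K -> T -> T) b n (X : ('I_n -> T) -> T)
    (W : 'I_K -> ('I_n -> T) -> T) :
  (forall i, unary_poly op (hs i)) -> is_poly op X -> (forall i, is_poly op (W i)) ->
  forall j, is_poly op (fun v => correct hs b j (X v) (fun i => W i v)).
Proof.
move=> hhs hX hW; elim=> [|j IH] //=; case: (insub j) => [i|] //.
apply: (poly_mal hm) => //; first exact: poly_cst.
exact: poly_unary_comp (hhs i) (hW i).
Qed.

Lemma correct_one K (hs : 'I_K -> T -> T) b b' x (i0 : 'I_K) :
  correct hs b K x (fun i => if i == i0 then b' else b) = M x (hs i0 b) (hs i0 b').
Proof.
suff partial j : (j <= K)%N -> correct hs b j x (fun i => if i == i0 then b' else b) =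
    if (j <= i0)%N then x else M x (hs i0 b) (hs i0 b').
  by rewrite partial // leqNgt ltn_ord.
elim: j => [|j IH] hj //=; rewrite insubT /= IH ?(ltnW hj) //.
case: (eqVneq (Ordinal hj) i0) => [<-|ne] /=; first by rewrite ltnn leqnn.
have {}ne : j != i0 := ne.
by rewrite ltn_neqAle ne /=; case: ifP => _; rewrite (malxyy hm).
Qed.

(* Every pair (x, a) in beta is captured by a unary polynomial through
   (b, b'), so adding one coordinate ranging over U per pair corrects the
   value of the spread from its beta-class to its alpha-class. *)
Lemma spread_mod_cover (alpha beta : T -> T -> Prop) (U : {set T}) (b b' : T) :
  congruence op alpha -> congruence op beta -> prime_quotient op alpha beta ->
  type2_minimal_set op U -> b \in U -> b' \in U -> beta b b' -> ~ alpha b b' ->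
  spread_mod beta -> spread_mod alpha.
Proof.
move=> halpha hbeta hprime hU bU b'U bbb' nbb' [k [p [Us [hp hUs hspread]]]].
have pair_poly (z : T * T) : exists h, unary_poly op h /\
    (beta z.1 z.2 -> alpha (h b) z.1 /\ alpha (h b') z.2).
  case: (classic (beta z.1 z.2)) => [bz|nbz]; last by exists id; split; first exact: unary_poly_id.
  by have [h [hh hb hb']] := cover_unary_poly hm halpha hbeta hprime bbb' nbb' bz; exists h.
pose K := #|{: T * T}|.
have [hs hhs] := choice _ (fun i : 'I_K => pair_poly (enum_val i)).
pose Us' (i : 'I_(k + K)) := if split i is inl j then Us j else U.
exists (k + K)%N.
exists (fun v => correct hs b K (p (fun i => v (lshift K i))) (fun i => v (rshift k i))), Us'.
split.
- apply: poly_correct => [i||i]; [by case: (hhs i) | | exact: poly_proj].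
  apply: (poly_comp (q := fun i (v : 'I_(k + K) -> T) => v (lshift K i)) hp) => i.
  exact: poly_proj.
- by move=> i; rewrite /Us'; case: (split i).
move=> a; have [u [hu bpu]] := hspread a.
pose i0 := enum_rank (p u, a).
pose w (i : 'I_K) := if i == i0 then b' else b.
exists (join_args u w); split.
  by move=> i; rewrite /Us' /join_args; case: (split i) => j //; rewrite /w; case: (j == i0).
have -> : (fun i => join_args u w (lshift K i)) = u.
  by apply: functional_extensionality => i; exact: join_args_lshift.
have -> : (fun i => join_args u w (rshift k i)) = w.
  by apply: functional_extensionality => i; exact: join_args_rshift.
rewrite correct_one.
have [_ /(_ _)] := hhs i0; rewrite /i0 enum_rankK /= => -[// | hpu ha].
have [alpha_refl _ _ _] := halpha.
by have := congruence_mal hm halpha (alpha_refl (p u)) hpu ha; rewrite (malyyx hm).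
Qed.

(* Going down from theta to lo along covers: each cover rho < eta in the
   interval is abelian, hence has a type 2 minimal set to correct with. *)
Lemma spread_mod_abelian (lo theta : T -> T -> Prop) :
  congruence op lo -> congruence op theta -> rle lo theta ->
  centralizes op theta theta lo -> spread_mod theta -> spread_mod lo.
Proof.
move=> hlo htheta lo_theta habel spread_theta.
suff spread_rho n rho : (#|{: T * T}| - rel_card rho < n)%N -> congruence op rho ->
    rle lo rho -> rle rho theta -> spread_mod rho.
  by apply: (spread_rho (#|{: T * T}| - rel_card lo).+1).
elim: n rho => [//|n IH] rho card_rho hrho lo_rho rho_theta.
case: (classic (rle theta rho)) => [theta_rho|theta_rho]; first exact: spread_mod_le theta_rho.
have [eta [heta hprime eta_theta]] := cover_exists hrho htheta rho_theta theta_rho.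
have [_ _ rho_eta eta_rho _] := hprime.
have spread_eta : spread_mod eta.
  apply: IH => //; last by move=> x y /lo_rho /rho_eta.
  have : (rel_card rho < rel_card eta)%N.
    by rewrite ltnNge; apply/negP => /(rel_card_ge rho_eta).
  have : (rel_card eta <= #|{: T * T}|)%N by exact: max_card.
  lia.
have [lo_refl _ _ _] := hlo.
have [U [b [b' [hU bU b'U bbb' nbb']]]] :=
  abelian_cover_type2 hm hrho heta lo_refl lo_rho
    (centralizes_le habel eta_theta eta_theta) hprime.
exact: spread_mod_cover hrho heta hprime hU bU b'U bbb' nbb' spread_eta.
Qed.

End Spread.

Theorem corollary5p5  (T : finType) (I : Type) (ar : I -> nat)
  (op : forall i : I, ('I_(ar i) -> T) -> T) :
  0 < #|T| ->
  solvable_alg op ->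
  (exists m, maltsev_poly op m) ->
  spread_of op (type2_minimal_set op).
Proof.
move=> T_gt0 [K derived_eq] [m hm].
have spread_derived j : spread_mod op (derived op j).
  elim: j => [|j IH]; first exact: spread_mod_total.
  apply: (spread_mod_abelian hm _ _ _ _ IH).
  - exact: congruence_derived.
  - exact: congruence_derived.
  - exact: commutator_le (congruence_derived op j).
  - exact: centralizes_commutator.
have [k [p [Us [hp hUs hspread]]]] := spread_derived K.
exists k, p, Us; split=> // a; have [u [hu hpu]] := hspread a.
by exists u; split=> //; exact: derived_eq.
Qed.
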